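(* Every continuous-variable PR box (as defined in the context) is an extreme point of the convex set $\mathcal M_{\mathrm{NS}}$ of no-signaling behaviours; i.e., if $\boldsymbol\mu\in\mathcal M_{\mathrm{PR}}$ and $\boldsymbol\mu=q\boldsymbol\mu^*+(1-q)\boldsymbol\mu'$ with $\boldsymbol\mu^*,\boldsymbol\mu'\in\mathcal M_{\mathrm{NS}}$ and $0\le q\le1$, then either $q=1$ and $\boldsymbol\mu^*=\boldsymbol\mu$, or $q=0$ and $\boldsymbol\mu'=\boldsymbol\mu$ (or $\boldsymbol\mu^*=\boldsymbol\mu'=\boldsymbol\mu$).
   Context: A behaviour is a family $\boldsymbol\mu=(\mu_{x,y})_{x,y\in\{0,1\}}$ of Borel probability measures on $\mathbb R\times\mathbb R$; convex combinations are taken componentwise. It is no-signaling if $\mu_{x,0}(A\times\mathbb R)=\mu_{x,1}(A\times\mathbb R)$ for all $x\in\{0,1\}$ and Borel $A\subseteq\mathbb R$, and $\mu_{0,y}(\mathbb R\times B)=\mu_{1,y}(\mathbb R\times B)$ for all $y\in\{0,1\}$ and Borel $B$; $\mathcal M_{\mathrm{NS}}$ denotes the set of no-signaling behaviours. For $(a,b)\in\mathbb R^2$, $\delta_{a,b}$ is the Dirac measure at $(a,b)$. A CV PR box of order $k\in\mathbb N$ is a behaviour of the form $\mu_{x,y}=\frac1k\sum_{j=1}^k\delta_{a_{x,j},\,b_{y,[j+xy]_k}}$, where for each $x,y\in\{0,1\}$, $\boldsymbol a_x=(a_{x,1},\dots,a_{x,k})\in\mathbb R^k$ and $\boldsymbol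 b_y=(b_{y,1},\dots,b_{y,k})\in\mathbb R^k$ each have pairwise distinct components, and $[\,\cdot\,]_k$ denotes reduction modulo $k$ to an index in $\{1,\dots,k\}$. $\mathcal M_{\mathrm{PR}}$ is the set of all CV PR boxes of all orders $k\in\mathbb N$ (for $k=1$ these are the deterministic behaviours $\mu_{x,y}=\delta_{a_x,b_y}$). *)

From HB Require Import structures.
From mathcomp Require Import all_boot all_order all_algebra.
From mathcomp Require Import all_classical all_reals all_analysis.
Set Implicit Arguments. Unset Strict Implicit. Unset Printing Implicit Defensive.
Import Order.TTheory GRing.Theory Num.Theory.
Local Open Scope classical_set_scope.
Local Open Scope ring_scope.
Local Open Scope ereal_scope.

(* A behaviour: for each pair of inputs (x,y) in {0,1}^2 (encoded as bool),
   a Borel probability measure on R x R (product sigma-algebra = Borel on R^2). *)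
Definition behaviour (R : realType) := bool -> bool -> probability (R * R)%type R.

Definition convex_comb (R : realType) (mu mu1 mu2 : behaviour R) (q : R) : Prop :=
  forall x y (A : set (R * R)), measurable A ->
    mu x y A = (q%:E * mu1 x y A + (1 - q)%:E * mu2 x y A)%E.

Definition beh_eq (R : realType) (mu nu : behaviour R) : Prop :=
  forall x y (A : set (R * R)), measurable A -> mu x y A = nu x y A.

Definition no_signaling (R : realType) (mu : behaviour R) : Prop :=
  (forall x (A : set R), measurable A ->
     mu x false (A `*` setT) = mu x true (A `*` setT)) /\
  (forall y (B : set R), measurable B ->
     mu false y (setT `*` B) = mu true y (setT `*` B)).

(* CV PR box of order k = n.+1 (k >= 1); indices j in {0,..,k-1} and
   [j + xy]_k becomes (j + x*y) mod k. *)
Definition is_CVPR (R : realType) (mu : behaviour R) : Prop :=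
  exists (n : nat) (a b : bool -> 'I_n.+1 -> R),
    (forall x, injective (a x)) /\ (forall y, injective (b y)) /\
    forall x y (A : set (R * R)), measurable A ->
      mu x y A = ((n.+1%:R)^-1)%:E *
        \sum_(j < n.+1) \d_(a x j, b y (inord ((j + (x && y)) %% n.+1)%N)) A.

From HB Require Import structures.
From mathcomp Require Import all_boot all_order all_algebra.
From mathcomp Require Import all_classical all_reals all_analysis.
Set Implicit Arguments. Unset Strict Implicit. Unset Printing Implicit Defensive.
Import Order.TTheory GRing.Theory Num.Theory.
Local Open Scope classical_set_scope.
Local Open Scope ring_scope.

(* If [mu = q mu1 + (1 - q) mu2] with [0 < q < 1], every [mu]-null set is null
   for [mu1] and [mu2], so both are carried by the [k] atoms of the PR box.
   For a no-signaling behaviour carried by these atoms, Alice's marginals force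
   the atom weights of [(x, 0)] and [(x, 1)] to agree, and Bob's marginals
   force those of [(0, y)] and [(1, y)] to agree up to the cyclic shift present
   in the [(1, 1)] box.  Chaining the four equalities shows that the weights of
   [(0, 0)] are invariant under the shift, hence all equal to [1/k]: the
   behaviour is the PR box itself. *)

Lemma measurable_set1_pair (R : realType) (p : R * R) : measurable [set p].
Proof.
case: p => u v; have -> : [set (u, v)] = [set u] `*` [set v].
  by apply/seteqP; split => -[s t] /=; [case=> -> -> | case => /= -> ->].
by apply: measurableX; exact: measurable_set1.
Qed.

Lemma measure_finite_support d (T : measurableType d) (R : realType)
    (nu : {measure set T -> \bar R}) k (pts : 'I_k -> T) :
    injective pts -> (forall i, measurable [set pts i]) ->
    (forall A, measurable A -> (forall i, ~ A (pts i)) -> nu A = 0%E) ->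
  forall A, measurable A -> nu A = (\sum_(i < k) nu [set pts i] * \d_(pts i) A)%E.
Proof.
move=> pts_inj mpts nu_off A mA.
pose S := \big[setU/set0]_(i < k) [set pts i].
have mS : measurable S by apply: bigsetU_measurable.
rewrite (measureDI nu mA mS) -[RHS]add0e; congr (_ + _)%E.
  apply: nu_off => [|i [_]]; first exact: measurableD.
  by apply; rewrite /S (bigD1 i) //=; left.
rewrite big_distrr measure_bigsetU_ord /=; last 2 first.
- by move=> i; rewrite setI1; case: ifP.
- by move=> i j _ _ [_ [[_ ->] [_ /pts_inj]]].
apply: eq_bigr => i _; rewrite setI1 diracE.
by case: ifP => _; rewrite ?mule1 ?mule0 ?measure0.
Qed.

Definition pr_shift n (x y : bool) (i : 'I_n.+1) : 'I_n.+1 :=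
  inord ((i + (x && y)) %% n.+1).

Lemma pr_shift_id n x y (i : 'I_n.+1) : ~~ (x && y) -> pr_shift x y i = i.
Proof.
by move=> /negbTE xy; rewrite /pr_shift xy addn0 modn_small // inord_val.
Qed.

Lemma pr_shift_inj n x y : injective (@pr_shift n x y).
Proof.
move=> i j /(congr1 val); rewrite /= !inordK ?ltn_pmod // => /eqP.
by rewrite eqn_modDr !modn_small // => /eqP /val_inj.
Qed.

Lemma pr_shift_succ n (i : nat) : (i.+1 < n.+1)%N ->
  pr_shift true true (inord i : 'I_n.+1) = inord i.+1.
Proof.
move=> lt_in; apply: val_inj; rewrite /pr_shift /= !inordK ?ltn_pmod //.
- by rewrite addn1 modn_small.
all: exact: ltnW.
Qed.

Section PRBox.
Variables (R : realType) (n : nat) (a b : bool -> 'I_n.+1 -> R).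
Hypotheses (a_inj : forall x, injective (a x)) (b_inj : forall y, injective (b y)).

Definition pr_atom x y i : R * R := (a x i, b y (pr_shift x y i)).

Lemma pr_atom_inj x y : injective (pr_atom x y).
Proof. by move=> i j [/a_inj]. Qed.

Section NoSignalingOnAtoms.
Variable nu : behaviour R.
Hypothesis nu_ns : no_signaling nu.
Hypothesis nu_off : forall x y A, measurable A ->
  (forall i, ~ A (pr_atom x y i)) -> nu x y A = 0%E.

Let w x y i := nu x y [set pr_atom x y i].

Lemma nu_atomE x y A : measurable A ->
  nu x y A = (\sum_(i < n.+1) w x y i * \d_(pr_atom x y i) A)%E.
Proof.
move=> mA; rewrite (measure_finite_support (@pr_atom_inj x y) _ (@nu_off x y)) //.
by move=> i; exact: measurable_set1_pair.
Qed.

Lemma nu_setX1T x y j : nu x y ([set a x j] `*` setT) = w x y j.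
Proof.
rewrite nu_atomE; last by apply: measurableX => //; exact: measurable_set1.
rewrite (bigD1 j) //= diracE mem_set // mule1 big1 ?adde0 // => i ij.
by rewrite diracE memNset ?mule0 //= => -[/a_inj ij']; rewrite ij' eqxx in ij.
Qed.

Lemma nu_setTX1 x y m : nu x y (setT `*` [set b y m]) =
  (\sum_(i < n.+1 | pr_shift x y i == m) w x y i)%E.
Proof.
rewrite nu_atomE; last by apply: measurableX => //; exact: measurable_set1.
rewrite [RHS]big_mkcond; apply: eq_bigr => i _; rewrite diracE.
case: eqP => [<-|im]; first by rewrite mem_set // mule1.
by rewrite memNset ?mule0 //= => -[_ /b_inj].
Qed.

Lemma w_indep_y x j : w x false j = w x true j.
Proof. by rewrite -!nu_setX1T; apply: nu_ns.1; exact: measurable_set1. Qed.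

Lemma w_indep_x_yF j : w false false j = w true false j.
Proof.
have := nu_ns.2 false [set b false j] (measurable_set1 _).
by rewrite !nu_setTX1 !(big_pred1 j) // => i; rewrite pr_shift_id.
Qed.

Lemma w_indep_x_yT j : w false true (pr_shift true true j) = w true true j.
Proof.
have := nu_ns.2 true [set b true (pr_shift true true j)] (measurable_set1 _).
rewrite !nu_setTX1 (big_pred1 (pr_shift true true j)) ?(big_pred1 j) //.
- by move=> i; rewrite inj_eq //; exact: pr_shift_inj.
- by move=> i; rewrite pr_shift_id.
Qed.

Lemma w00_shift j : w false false (pr_shift true true j) = w false false j.
Proof. by rewrite w_indep_y w_indep_x_yT -w_indep_y -w_indep_x_yF. Qed.

Lemma w00_const j : w false false j = w false false ord0.
Proof.
suff w_inord i : (i < n.+1)%N -> w false false (inord i) = w false false ord0.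
  by rewrite -(w_inord j) ?inord_val.
elim: i => [_|i IH lt_in]; first by congr w; apply: val_inj; rewrite /= inordK.
by rewrite -pr_shift_succ // w00_shift IH // ltnW.
Qed.

Lemma w00_ord0 : w false false ord0 = (n.+1%:R^-1)%:E.
Proof.
have : (\sum_(i < n.+1) w false false i = 1)%E.
  rewrite -(probability_setT (nu false false)) nu_atomE //.
  by apply: eq_bigr => i _; rewrite diracE mem_set // mule1.
under eq_bigr do rewrite w00_const.
have : (0 <= w false false ord0)%E by exact: measure_ge0.
have : (w false false ord0 <= 1)%E.
  by apply: probability_le1; exact: measurable_set1_pair.
case: (w false false ord0) => [r| |] //= _ _.
rewrite sumEFin sumr_const card_ord => -[nr1]; congr EFin.
by rewrite -[LHS](mulfK (_ : n.+1%:R != 0)) ?pnatr_eq0 // mulr_natr nr1 mul1r.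
Qed.

Lemma w_uniform x y i : w x y i = (n.+1%:R^-1)%:E.
Proof.
rewrite -w00_ord0 -(w00_const i).
by case: x; case: y; rewrite ?w_indep_x_yF -?w_indep_y ?w_indep_x_yF.
Qed.

End NoSignalingOnAtoms.

Lemma no_signaling_abs_cont_pr_box (mu nu : behaviour R) :
    (forall x y A, measurable A ->
      mu x y A = (n.+1%:R^-1)%:E * \sum_(j < n.+1) \d_(pr_atom x y j) A)%E ->
    no_signaling nu ->
    (forall x y A, measurable A -> mu x y A = 0%E -> nu x y A = 0%E) ->
  beh_eq nu mu.
Proof.
move=> muE nu_ns nu_ll_mu x y A mA.
have nu_off x' y' A' : measurable A' ->
    (forall i, ~ A' (pr_atom x' y' i)) -> nu x' y' A' = 0%E.
  move=> mA' A'_off; apply: nu_ll_mu => //; rewrite muE // big1 ?mule0 // => i _.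
  by rewrite diracE memNset.
rewrite nu_atomE // muE // ge0_sume_distrr //; apply: eq_bigr => i _.
by rewrite w_uniform.
Qed.

End PRBox.

Lemma convex_comb_null (R : realType) (mu mu1 mu2 : behaviour R) (q : R) :
    0 < q < 1 -> convex_comb mu mu1 mu2 q ->
  forall x y A, measurable A -> mu x y A = 0%E ->
    mu1 x y A = 0%E /\ mu2 x y A = 0%E.
Proof.
move=> /andP[q_gt0 q_lt1] mu_cc x y A mA; rewrite mu_cc // => /eqP.
have q_ge0 : (0 <= q%:E)%E by rewrite lee_fin ltW.
have q'_ge0 : (0 <= (1 - q)%:E)%E by rewrite lee_fin subr_ge0 ltW.
rewrite padde_eq0 ?mule_ge0 // !mule_eq0 !eqe (gt_eqF q_gt0) subr_eq0.
by rewrite (gt_eqF q_lt1) => /andP[/eqP -> /eqP ->].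
Qed.

Theorem mainTheorem2 (R : realType) (mu mu1 mu2 : behaviour R) (q : R) :
  is_CVPR mu -> no_signaling mu1 -> no_signaling mu2 ->
  0 <= q <= 1 -> convex_comb mu mu1 mu2 q ->
  (q = 1 /\ beh_eq mu1 mu) \/ (q = 0 /\ beh_eq mu2 mu) \/
  (beh_eq mu1 mu /\ beh_eq mu2 mu).
Proof.
move=> [n [a [b [a_inj [b_inj muE]]]]] ns1 ns2 /andP[q_ge0 q_le1] mu_cc.
have [q0|q_neq0] := eqVneq q 0.
  right; left; split=> // x y A mA.
  by rewrite mu_cc // q0 subr0 mul1e mul0e add0e.
have [q1|q_neq1] := eqVneq q 1.
  left; split=> // x y A mA.
  by rewrite mu_cc // q1 subrr mul1e mul0e adde0.
have q01 : 0 < q < 1 by rewrite !lt_neqAle eq_sym q_neq0 q_neq1 q_ge0 q_le1.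
have mu_null := convex_comb_null q01 mu_cc.
right; right; split.
- apply: (no_signaling_abs_cont_pr_box a_inj b_inj muE ns1).
  by move=> x y A mA /(mu_null x y A mA) [].
- apply: (no_signaling_abs_cont_pr_box a_inj b_inj muE ns2).
  by move=> x y A mA /(mu_null x y A mA) [].
Qed.
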